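(* Let $\alpha = (1,-1)$ denote the simple positive coroot of $SL_2$. Then there is an algebra map \begin{equation*} \mathsf{Y}_{-\alpha}(\mathfrak{sl}_2) \to \mathrm{Diff}(\mathbb{C}^\times) \end{equation*} uniquely determined by $T(x) \mapsto S(x)$, where \begin{equation*} S(x) = \begin{bmatrix} x - \varepsilon z\partial_z & z^{-1} \\ -z & 0 \end{bmatrix} \in \mathrm{Diff}(\mathbb{C}^\times) \otimes \mathrm{End}(V). \end{equation*}
   Context: Fix a generic parameter $\varepsilon$. Let $V \simeq \mathbb{C}^2$ be the defining representation of $\mathfrak{gl}_2$ and let $R(x) = \frac{x - \varepsilon P_{12}}{x-\varepsilon} \in \mathrm{End}(V_1\otimes V_2)(x)$, where $P_{12}$ is the permutation of tensor factors. For a dominant coweight $\mu=(\mu_1,\mu_2)$ of $GL_2$, the antidominantly shifted Yangian $\mathsf{Y}_{-\mu}(\mathfrak{gl}_2)$ is generated by the coefficients $T^{(r)}_{ij}$ of a matrix $T(x)$ with entries $T_{ij}(x) = \sum_{r\in\mathbb{Z}} T^{(r)}_{ij} x^{-r}$, subject to the RTT relations $R_{12}(x_1-x_2)T_1(x_1)T_2(x_2) = T_2(x_2)T_1(x_1)R_{12}(x_1-x_2)$, and requiring a Gauss decomposition $T(x) = \begin{bmatrix}1&0\\ f(x)&1\end{bmatrix}\begin{bmatrix} g_1(x)&0\\0&g_2(x)\end{bmatrix}\begin{bmatrix}1&e(x)\\0&1\end{bmatrix}$ with $f(x), e(x) = O(x^{-1})$ and $g_i(x) = x^{\mu_i} +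 O(x^{\mu_i-1})$ as $x\to\infty$. The quantum determinant $\mathrm{qdet}\,T(x) = T_{22}(x)T_{11}(x-\varepsilon) - T_{12}(x)T_{21}(x-\varepsilon)$ generates the center, and $\mathsf{Y}_{-\mu}(\mathfrak{sl}_2)$ is the quotient of $\mathsf{Y}_{-\mu}(\mathfrak{gl}_2)$ by $\mathrm{qdet}\,T(x)=1$. $\mathrm{Diff}(\mathbb{C}^\times)$ denotes polynomial differential operators in the coordinate $z$ on $\mathbb{C}^\times$. One checks that $S(x)$ satisfies the same RTT relation with this $R$-matrix, that its Gauss decomposition has $g_1(x) = x + \dots$, $g_2(x) = x^{-1}+\dots$, and that $\mathrm{qdet}\,S(x) = 1$. *)

From mathcomp Require Import all_boot all_order all_algebra.
From mathcomp Require Import complex Rstruct.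

Set Implicit Arguments.
Unset Strict Implicit.
Unset Printing Implicit Defensive.
Import Order.TTheory GRing.Theory Num.Theory.
Local Open Scope ring_scope.

Definition CC : fieldType := (Rdefinitions.R)[i].

Definition is_alg_hom (A B : algType CC) (phi : A -> B) : Prop :=
  [/\ forall x y : A, phi (x + y) = phi x + phi y,
      forall (c : CC) (x : A), phi (c *: x) = c *: phi x,
      forall x y : A, phi (x * y) = phi x * phi y
    & phi 1 = 1].

Definition i1 : 'I_2 := @Ordinal 2 0 isT.
Definition i2 : 'I_2 := @Ordinal 2 1 isT.

(* A (one-variable) series  f(x) = \sum_{r \in Z} f r x^{-r}  with coefficients
   in A is represented by its coefficient function  f : int -> A
   (f r = coefficient of x^{-r}).  A matrix series T(x) = (T_ij(x)) is
   t : 'I_2 -> 'I_2 -> int -> A, with t i j r = T^{(r)}_{ij}. *)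

(* Product of two series f, g supported in degrees r >= L1 (resp. r >= L2),
   i.e. f(x) \in x^{-L1} A[[x^{-1}]]; the product is supported in r >= L1+L2. *)
Definition sermul (A : algType CC) (L1 L2 : int) (f g : int -> A) (n : int) : A :=
  if (L1 + L2 <= n) then
    \sum_(k < (absz (n - L1 - L2)%R).+1) f (L1 + k%:Z) * g (n - L1 - k%:Z)
  else 0.

Definition gbinom (a : int) (m : nat) : CC :=
  (\prod_(i < m) ((a - i%:Z)%:~R : CC)) / (m`!)%:R.

(* Coefficient of x^{-n} in (x - c)^{-r}, with m = n - r >= 0:
   (x - c)^{-r} = \sum_{m >= 0} binom(-r, m) (-c)^m x^{-r-m}. *)
Definition shift_coef (c : CC) (r : int) (m : nat) : CC :=
  gbinom (- r) m * (- c) ^+ m.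

(* The series f(x - c), for f supported in degrees r >= L. *)
Definition sershift (A : algType CC) (c : CC) (L : int) (f : int -> A) (n : int) : A :=
  if (L <= n) then
    \sum_(k < (absz (n - L)%R).+1) shift_coef c (L + k%:Z) (absz (n - L)%R - k)%N *: f (L + k%:Z)
  else 0.

(* Formal series in two variables x1, x2 are represented by
   coefficient functions int -> int -> A: (a, b) |-> coefficient of
   x1^{-a} x2^{-b}.  Matrices in End(V_1 (x) V_2), V = C^2, are indexed by
   pairs ('I_2 * 'I_2), (i,k) <-> e_i (x) e_k.
   T_1(x1) = T(x1) (x) 1,  T_2(x2) = 1 (x) T(x2),  P_{12} the flip. *)

Definition Pmx (A : algType CC) (ik pq : 'I_2 * 'I_2) : A :=
  if (ik.1 == pq.2) && (ik.2 == pq.1) then 1 else 0.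

Definition T1T2 (A : algType CC) (t : 'I_2 -> 'I_2 -> int -> A)
    (pq jl : 'I_2 * 'I_2) (a b : int) : A :=
  \sum_(mn : 'I_2 * 'I_2)
     ((if pq.2 == mn.2 then t pq.1 mn.1 a else 0) *
      (if mn.1 == jl.1 then t mn.2 jl.2 b else 0)).

Definition T2T1 (A : algType CC) (t : 'I_2 -> 'I_2 -> int -> A)
    (pq jl : 'I_2 * 'I_2) (a b : int) : A :=
  \sum_(mn : 'I_2 * 'I_2)
     ((if pq.1 == mn.1 then t pq.2 mn.2 b else 0) *
      (if mn.2 == jl.2 then t mn.1 jl.1 a else 0)).

(* left multiplication by the numerator (x1 - x2) - eps P_{12} of R_{12}(x1 - x2) *)
Definition Rnum_left (A : algType CC) (eps : CC)
    (M : 'I_2 * 'I_2 -> 'I_2 * 'I_2 -> int -> int -> A)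
    (ik jl : 'I_2 * 'I_2) (a b : int) : A :=
  M ik jl (a + 1) b - M ik jl a (b + 1)
  - eps *: \sum_(pq : 'I_2 * 'I_2) Pmx A ik pq * M pq jl a b.

(* right multiplication by (x1 - x2) - eps P_{12} *)
Definition Rnum_right (A : algType CC) (eps : CC)
    (M : 'I_2 * 'I_2 -> 'I_2 * 'I_2 -> int -> int -> A)
    (ik jl : 'I_2 * 'I_2) (a b : int) : A :=
  M ik jl (a + 1) b - M ik jl a (b + 1)
  - eps *: \sum_(pq : 'I_2 * 'I_2) M ik pq a b * Pmx A pq jl.

(* R_{12}(x1-x2) T_1(x1) T_2(x2) = T_2(x2) T_1(x1) R_{12}(x1-x2), with
   R(x) = (x - eps P)/(x - eps); the scalar denominator x1 - x2 - eps is
   cleared on both sides. *)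
Definition RTT (A : algType CC) (eps : CC) (t : 'I_2 -> 'I_2 -> int -> A) : Prop :=
  forall (ik jl : 'I_2 * 'I_2) (a b : int),
    Rnum_left eps (T1T2 t) ik jl a b = Rnum_right eps (T2T1 t) ik jl a b.

(* Gauss decomposition of shape mu = (mu1, mu2):
   T(x) = [1 0; f 1] [g1 0; 0 g2] [1 e; 0 1], with e, f = O(x^{-1}) and
   g_i(x) = x^{mu_i} + O(x^{mu_i - 1}). Entrywise:
   T11 = g1, T12 = g1 e, T21 = f g1, T22 = f g1 e + g2. *)
Definition gauss_decomp (A : algType CC) (mu : int * int)
    (t : 'I_2 -> 'I_2 -> int -> A) : Prop :=
  exists (e f g1 g2 : int -> A),
    [/\ forall r, (r <= 0) -> e r = 0,
        forall r, (r <= 0) -> f r = 0,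
        (forall r, (r < - mu.1) -> g1 r = 0) /\ g1 (- mu.1) = 1,
        (forall r, (r < - mu.2) -> g2 r = 0) /\ g2 (- mu.2) = 1 &
        forall r,
        [/\ t i1 i1 r = g1 r,
            t i1 i2 r = sermul (- mu.1) 1 g1 e r,
            t i2 i1 r = sermul 1 (- mu.1) f g1 r &
            t i2 i2 r = sermul (1 - mu.1) 1 (sermul 1 (- mu.1) f g1) e r + g2 r]].

(* quantum determinant qdet T(x) = T22(x) T11(x - eps) - T12(x) T21(x - eps),
   for T with all entries supported in degrees r >= - mu1 (which holds for
   T with a Gauss decomposition of shape mu, mu dominant). *)
Definition qdet (A : algType CC) (eps : CC) (mu : int * int)
    (t : 'I_2 -> 'I_2 -> int -> A) (n : int) : A :=
  sermul (- mu.1) (- mu.1) (t i2 i2) (sershift eps (- mu.1) (t i1 i1)) n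
  - sermul (- mu.1) (- mu.1) (t i1 i2) (sershift eps (- mu.1) (t i2 i1)) n.

Definition yangian_sl2_rel (A : algType CC) (eps : CC) (mu : int * int)
    (t : 'I_2 -> 'I_2 -> int -> A) : Prop :=
  [/\ RTT eps t, gauss_decomp mu t & forall n, qdet eps mu t n = (n == 0)%:R].

(* (Y, T) is the antidominantly shifted Yangian Y_{-mu}(sl_2): the C-algebra
   generated by the T^{(r)}_{ij} subject to the relations above, expressed by
   its universal property. *)
Definition is_shifted_yangian_sl2 (eps : CC) (mu : int * int)
    (Y : algType CC) (T : 'I_2 -> 'I_2 -> int -> Y) : Prop :=
  yangian_sl2_rel eps mu T /\
  forall (A : algType CC) (t : 'I_2 -> 'I_2 -> int -> A),
    yangian_sl2_rel eps mu t ->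
    exists phi : Y -> A,
      [/\ is_alg_hom phi, (forall i j r, phi (T i j r) = t i j r) &
          forall psi : Y -> A, is_alg_hom psi ->
            (forall i j r, psi (T i j r) = t i j r) -> psi =1 phi].

(* (D, z, zi, d) is Diff(C^x) = C[z, z^{-1}]<d_z>, the algebra of polynomial
   differential operators on C^x, via its standard presentation:
   generators z, z^{-1}, d_z with z z^{-1} = z^{-1} z = 1, d_z z - z d_z = 1. *)
Definition diff_rel (A : algType CC) (z zi d : A) : Prop :=
  [/\ z * zi = 1, zi * z = 1 & d * z - z * d = 1].

Definition is_Diff_Cx (D : algType CC) (z zi d : D) : Prop :=
  diff_rel z zi d /\
  forall (A : algType CC) (z' zi' d' : A),
    diff_rel z' zi' d' ->
    exists phi : D -> A,
      [/\ is_alg_hom phi, [/\ phi z = z', phi zi = zi' & phi d = d'] &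
          forall psi : D -> A, is_alg_hom psi ->
            [/\ psi z = z', psi zi = zi' & psi d = d'] -> psi =1 phi].

Definition alpha : int * int := (1 : int, - 1 : int).

(* Coefficients of S(x) = [x - eps z d_z, z^{-1}; -z, 0]:
   S_ij(x) = \sum_r S^{(r)}_ij x^{-r}. *)
Definition S_coef (D : algType CC) (eps : CC) (z zi d : D)
    (i j : 'I_2) (r : int) : D :=
  if (i == i1) && (j == i1) then
    (if r == - 1 then 1 else if r == 0 then - (eps *: (z * d)) else 0)
  else if (i == i1) && (j == i2) then (if r == 0 then zi else 0)
  else if (i == i2) && (j == i1) then (if r == 0 then - z else 0)
  else 0.

(* Write S(x) = x E + B with E = E_11 scalar and B = [-eps z d_z, z^-1; -z, 0].
   For a matrix of degree one with scalar leading term, the RTT relation reduces to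
   [B_ij, B_kl] = eps (E_kj B_il - E_il B_kj); for S these are the brackets
   [z d_z, z] = z, [z d_z, z^-1] = -z^-1 and [z, z^-1] = 0 of Diff(C^x).
   With Q(x) = (x - eps z d_z)^-1 = sum_m (eps z d_z)^m x^(-m-1), the Gauss
   decomposition of S is g1 = x - eps z d_z, e = Q z^-1, f = -z Q, g2 = z Q z^-1,
   and as S_22 = 0 and S_21 = -z is constant, qdet S(x) = z^-1 z = 1.  The
   universal property of the shifted Yangian then gives the unique map T |-> S. *)

From mathcomp Require Import all_boot all_algebra.
From mathcomp Require Import complex Rstruct zify.
Import GRing.Theory Num.Theory.
Set Implicit Arguments.
Unset Strict Implicit.
Unset Printing Implicit Defensive.
Local Open Scope ring_scope.

Lemma ord2P (i : 'I_2) : i = i1 \/ i = i2.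
Proof. by case: i => -[|[|//]] ?; [left | right]; apply: val_inj. Qed.

Section RTTEntries.
Variables (A : algType CC) (eps : CC).

Lemma T1T2E (t : 'I_2 -> 'I_2 -> int -> A) i k j l a b :
  T1T2 t (i, k) (j, l) a b = t i j a * t k l b.
Proof.
rewrite /T1T2 (bigD1 (j, k)) //= !eqxx big1 ?addr0 // => -[m n] /=.
by rewrite xpair_eqE negb_and => /orP[] /negbTE hmn; rewrite ?hmn ?mulr0 // eq_sym hmn mul0r.
Qed.

Lemma T2T1E (t : 'I_2 -> 'I_2 -> int -> A) i k j l a b :
  T2T1 t (i, k) (j, l) a b = t k l b * t i j a.
Proof.
rewrite /T2T1 (bigD1 (i, l)) //= !eqxx big1 ?addr0 // => -[m n] /=.
by rewrite xpair_eqE negb_and => /orP[] /negbTE hmn; rewrite ?hmn ?mulr0 // eq_sym hmn mul0r.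
Qed.

Variable M : 'I_2 * 'I_2 -> 'I_2 * 'I_2 -> int -> int -> A.

Lemma Rnum_leftE i k jl a b :
  Rnum_left eps M (i, k) jl a b =
  M (i, k) jl (a + 1) b - M (i, k) jl a (b + 1) - eps *: M (k, i) jl a b.
Proof.
rewrite /Rnum_left (bigD1 (k, i)) //= /Pmx /= !eqxx mul1r big1 ?addr0 // => -[p q] /=.
by move=> hpq; rewrite ifF ?mul0r //; apply: contraNF hpq => /andP[/eqP-> /eqP->].
Qed.

Lemma Rnum_rightE ik j l a b :
  Rnum_right eps M ik (j, l) a b =
  M ik (j, l) (a + 1) b - M ik (j, l) a (b + 1) - eps *: M ik (l, j) a b.
Proof.
rewrite /Rnum_right (bigD1 (l, j)) //= /Pmx /= !eqxx mulr1 big1 ?addr0 // => -[p q] /=.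
by move=> hpq; rewrite ifF ?mulr0 //; apply: contraNF hpq => /andP[/eqP-> /eqP->].
Qed.

End RTTEntries.

Lemma gbinom0 m : gbinom 0 m = (m == 0)%:R.
Proof.
rewrite /gbinom; case: m => [|m]; first by rewrite big_ord0 invr1 mulr1.
by rewrite big_ord_recl subr0 !mul0r.
Qed.

Lemma shift_coef0 c m : shift_coef c 0 m = (m == 0)%:R.
Proof. by rewrite /shift_coef oppr0 gbinom0; case: m => [|m]; rewrite ?mul0r // expr0 mulr1. Qed.

Section Series.
Variable A : algType CC.
Implicit Types (f g : int -> A) (X y : A) (p n r : int).

Definition monomial (p : int) y (r : int) : A := if r == p then y else 0.

Definition lin_series (c : CC) y (r : int) : A :=
  if r == -1 then c%:A else if r == 0 then y else 0.

Lemma lin_seriesE c y r : lin_series c y r = monomial (-1) c%:A r + monomial 0 y r.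
Proof. by rewrite /lin_series /monomial; case: eqP => [->|_] /=; rewrite ?addr0 ?add0r. Qed.

Lemma lin_series_out c y r : r != -1 -> r != 0 -> lin_series c y r = 0.
Proof. by rewrite /lin_series => /negbTE-> /negbTE->. Qed.

Lemma monomial_out p (y : A) r : r != p -> monomial p y r = 0.
Proof. by rewrite /monomial => /negbTE->. Qed.

Lemma eq_sermul L1 L2 f f' g g' :
  f =1 f' -> g =1 g' -> sermul L1 L2 f g =1 sermul L1 L2 f' g'.
Proof.
by move=> ff' gg' n; rewrite /sermul; case: ifP => // _; apply: eq_bigr => k _; rewrite ff' gg'.
Qed.

Lemma sermulDl L1 L2 f1 f2 g n :
  sermul L1 L2 (fun r => f1 r + f2 r) g n = sermul L1 L2 f1 g n + sermul L1 L2 f2 g n.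
Proof.
rewrite /sermul; case: ifP => _; rewrite ?addr0 // -big_split.
by apply: eq_bigr => k _; rewrite mulrDl.
Qed.

Lemma sermulDr L1 L2 f g1 g2 n :
  sermul L1 L2 f (fun r => g1 r + g2 r) n = sermul L1 L2 f g1 n + sermul L1 L2 f g2 n.
Proof.
rewrite /sermul; case: ifP => _; rewrite ?addr0 // -big_split.
by apply: eq_bigr => k _; rewrite mulrDr.
Qed.

Lemma monomial_sermul (L1 L2 : int) p y g n :
  L1 <= p -> (forall r, r < L2 -> g r = 0) -> sermul L1 L2 (monomial p y) g n = y * g (n - p).
Proof.
move=> Lp g0; rewrite /sermul; case: ifP => hn; last by rewrite g0 ?mulr0 //; lia.
have [hk|hk] := ltnP (absz (p - L1)%R) (absz (n - L1 - L2)%R).+1.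
- rewrite (bigD1 (Ordinal hk)) //= big1 ?addr0 => [|k /eqP hk'].
    by rewrite /monomial ifT; [congr (_ * g _) | apply/eqP]; lia.
  by rewrite /monomial ifF ?mul0r //; apply/eqP => hkp; apply: hk'; apply: val_inj => /=; lia.
- rewrite g0 ?mulr0; last by lia.
  by rewrite big1 // => k _; rewrite /monomial ifF ?mul0r //; have := ltn_ord k; lia.
Qed.

Lemma sermul_monomial (L1 L2 : int) p y f n :
  L2 <= p -> (forall r, r < L1 -> f r = 0) -> sermul L1 L2 f (monomial p y) n = f (n - p) * y.
Proof.
move=> Lp f0; rewrite /sermul; case: ifP => hn; last by rewrite f0 ?mul0r //; lia.
have [np|np] := lerP L1 (n - p); last first.
  by rewrite f0 ?mul0r // big1 // => k _; rewrite /monomial ifF ?mulr0 //; lia.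
have hk : (absz (n - L1 - p)%R < (absz (n - L1 - L2)%R).+1)%N by lia.
rewrite (bigD1 (Ordinal hk)) //= big1 ?addr0 => [|k /eqP hk'].
  by rewrite /monomial ifT; [congr (f _ * _) | apply/eqP]; lia.
by rewrite /monomial ifF ?mulr0 //; apply/eqP => hkp; apply: hk'; apply: val_inj => /=; lia.
Qed.

(* (x - X)^-1 = sum_(m >= 0) X^m x^(-m-1) *)
Definition resolvent X (r : int) : A := if r is Posz m.+1 then X ^+ m else 0.

Lemma resolvent_le0 X r : r <= 0 -> resolvent X r = 0.
Proof. by case: r => [[|m]|m]. Qed.

Lemma resolventSl X r : resolvent X (r + 1) = X * resolvent X r + (r == 0)%:R.
Proof. by case: r => [[|m]|[|m]] //=; rewrite ?mulr0 ?add0r ?addr0 // addn1 exprS. Qed.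

Lemma resolventSr X r : resolvent X (r + 1) = resolvent X r * X + (r == 0)%:R.
Proof. by case: r => [[|m]|[|m]] //=; rewrite ?mul0r ?add0r ?addr0 // addn1 exprSr. Qed.

Lemma lin_sermul_resolvent X y :
  sermul (-1) 1 (lin_series 1 (-X)) (fun r => resolvent X r * y) =1 monomial 0 y.
Proof.
have res0 r : r < 1 -> resolvent X r * y = 0 by move=> r1; rewrite resolvent_le0 ?mul0r //; lia.
move=> n; rewrite (eq_sermul _ _ (lin_seriesE 1 (-X)) (frefl _)) sermulDl.
rewrite !monomial_sermul // opprK subr0 resolventSl mulr_algl scale1r.
rewrite mulrDl mulNr mulrA addrAC subrr add0r.
by rewrite /monomial; case: (n == 0); rewrite ?mul1r ?mul0r.
Qed.

Lemma resolvent_sermul_lin X y :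
  sermul 1 (-1) (fun r => y * resolvent X r) (lin_series 1 (-X)) =1 monomial 0 y.
Proof.
have res0 r : r < 1 -> y * resolvent X r = 0 by move=> r1; rewrite resolvent_le0 ?mulr0 //; lia.
move=> n; rewrite (eq_sermul _ _ (frefl _) (lin_seriesE 1 (-X))) sermulDr.
rewrite !sermul_monomial // opprK subr0 resolventSr mulr_algr scale1r.
rewrite mulrDr mulrN mulrA addrAC subrr add0r.
by rewrite /monomial; case: (n == 0); rewrite ?mulr1 ?mulr0.
Qed.

Lemma sershift_monomial0 c (L : int) (y : A) :
  L <= 0 -> sershift c L (monomial 0 y) =1 monomial 0 y.
Proof.
move=> L0 n; rewrite /sershift; case: ifP => Ln; last by rewrite monomial_out //; apply/eqP; lia.
have [n0|n0] := ltrP n 0.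
  rewrite [RHS]monomial_out; last by apply/eqP; lia.
  rewrite big1 // => k _; rewrite monomial_out ?scaler0 //.
  by have := ltn_ord k; move=> kn; apply/eqP; lia.
have hk : (absz L < (absz (n - L)%R).+1)%N by lia.
rewrite (bigD1 (Ordinal hk)) //= big1 ?addr0 => [|k /eqP hk']; last first.
  by rewrite monomial_out ?scaler0 //; apply/eqP => Lk0; apply: hk'; apply: val_inj => /=; lia.
rewrite (_ : L + _ = 0); last by lia.
rewrite (_ : (_ - _)%N = absz n) ?shift_coef0 /monomial ?eqxx; last by lia.
by case: n n0 {Ln hk} => [[|m]|m] n0 /=; rewrite ?scale1r ?scale0r.
Qed.

End Series.

Lemma subr_swap (V : zmodType) (x y u w : V) : x - y = u - w -> x - u = y - w.
Proof. by move=> h; apply/eqP; rewrite subr_eq -addrA addrC -subr_eq h addrC. Qed.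

Lemma RTT_linear (A : algType CC) eps (E : 'I_2 -> 'I_2 -> CC)
    (B : 'I_2 -> 'I_2 -> A) (t : 'I_2 -> 'I_2 -> int -> A) :
  (forall i j r, t i j r = lin_series (E i j) (B i j) r) ->
  (forall i j k l,
     B i j * B k l - B k l * B i j = eps *: (E k j *: B i l - E i l *: B k j)) ->
  RTT eps t.
Proof.
move=> tE BB [i k] [j l] a b; rewrite Rnum_leftE Rnum_rightE !T1T2E !T2T1E !tE.
have at_deg (r : int) : [\/ r = -2, r = -1, r = 0 |
    forall c (y : A), lin_series c y r = 0 /\ lin_series c y (r + 1) = 0].
  have [->|r2] := eqVneq r (-2); first by constructor 1.
  have [->|r1] := eqVneq r (-1); first by constructor 2.
  have [->|r0] := eqVneq r 0; first by constructor 3.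
  by constructor 4 => c y; rewrite !lin_series_out //; lia.
case: (at_deg a) => [->|->|->|ha]; case: (at_deg b) => [->|->|->|hb].
all: rewrite ?(proj1 (ha _ _)) ?(proj2 (ha _ _)) ?(proj1 (hb _ _)) ?(proj2 (hb _ _)).
all: rewrite /lin_series /= ?(mul0r, mulr0, addr0, subr0, sub0r, oppr0, scaler0).
all: rewrite ?(mulr_algl, mulr_algr) //.
all: try by rewrite !scalerA mulrC.
(* Since E is scalar, only the coefficients at (a, b) = (-1, 0) and (0, -1) see [B]. *)
- by apply: subr_swap; rewrite BB scalerBr.
- by apply: subr_swap; rewrite opprK addrC BB scalerBr.
Qed.

Section DiffOperators.
Variables (eps : CC) (D : algType CC) (z zi d : D).
Hypothesis zdiff : diff_rel z zi d.

Local Notation X := (eps *: (z * d)).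

Lemma lie_zd_z : z * d * z - z * (z * d) = z.
Proof. by case: zdiff => _ _ dz; rewrite -mulrA -mulrBr dz mulr1. Qed.

Lemma lie_zd_zi : z * d * zi - zi * (z * d) = - zi.
Proof.
case: zdiff => zzi ziz dz.
have dzi : d - z * d * zi = zi.
  by rewrite -{1}(mulr1 d) -zzi mulrA -mulrBl dz mul1r.
by rewrite mulrA ziz mul1r -[in RHS]dzi opprB.
Qed.

Lemma lie_euler_z : X * z - z * X = eps *: z.
Proof. by rewrite -scalerAl -scalerAr -scalerBr lie_zd_z. Qed.

Lemma lie_euler_zi : X * zi - zi * X = - (eps *: zi).
Proof. by rewrite -scalerAl -scalerAr -scalerBr lie_zd_zi scalerN. Qed.

Definition S_lead (i j : 'I_2) : CC := if (i == i1) && (j == i1) then 1 else 0.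

Definition S_const (i j : 'I_2) : D :=
  if (i == i1) && (j == i1) then - X
  else if (i == i1) && (j == i2) then zi
  else if (i == i2) && (j == i1) then - z
  else 0.

Lemma S_coefE i j r :
  S_coef eps z zi d i j r = lin_series (S_lead i j) (S_const i j) r.
Proof.
rewrite /S_coef /lin_series /S_lead /S_const.
case: (ord2P i) => ->; case: (ord2P j) => ->; rewrite /= ?scale1r ?scale0r ?if_same //.
all: by case: (r =P -1) => [->|].
Qed.

Lemma S_const_comm i j k l :
  S_const i j * S_const k l - S_const k l * S_const i j =
  eps *: (S_lead k j *: S_const i l - S_lead i l *: S_const k j).
Proof.
rewrite /S_const /S_lead.
case: (ord2P i) => ->; case: (ord2P j) => ->; case: (ord2P k) => ->; case: (ord2P l) => -> /=.
all: rewrite ?(scale1r, scale0r, mulr0, mul0r, subrr, subr0, sub0r, oppr0, scaler0) //.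
all: rewrite ?(mulrN, mulNr, opprK, addr0, scaler0, scalerN) ?[- _ + _]addrC //.
(* The only non-trivial brackets are those of X with z and z^-1, and of z with z^-1. *)
all: first [ by rewrite lie_euler_z | by rewrite lie_euler_zi | by rewrite -opprB lie_euler_z
           | by rewrite -opprB lie_euler_zi opprK | by case: zdiff => -> ->; rewrite subrr ].
Qed.

Local Notation S := (S_coef eps z zi d).

Lemma S_RTT : RTT eps S.
Proof. exact: RTT_linear S_coefE S_const_comm. Qed.

Lemma S11E : S i1 i1 =1 lin_series 1 (- X).
Proof. by move=> r; rewrite S_coefE. Qed.

Lemma S12E : S i1 i2 =1 monomial 0 zi.
Proof. by []. Qed.

Lemma S22E r : S i2 i2 r = 0.
Proof. by []. Qed.

Lemma S_gauss_decomp : gauss_decomp alpha S.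
Proof.
pose e r := resolvent X r * zi; pose f r := - z * resolvent X r.
exists e, f, (S i1 i1), (fun r => z * resolvent X r * zi); split => /=.
- by move=> r r0; rewrite /e resolvent_le0 ?mul0r.
- by move=> r r0; rewrite /f resolvent_le0 ?mulr0.
- split=> [r r1|]; last by rewrite S11E /lin_series /= scale1r.
  by rewrite S11E lin_series_out //; apply/eqP; lia.
- split=> [r r1|]; last by rewrite expr0 mulr1; case: zdiff.
  by rewrite resolvent_le0 ?mulr0 ?mul0r //; lia.
move=> r; split.
- by [].
- by rewrite S12E (eq_sermul _ _ S11E (frefl _)) lin_sermul_resolvent.
- by rewrite (eq_sermul _ _ (frefl _) S11E) resolvent_sermul_lin.
- rewrite S22E (eq_sermul _ _ (eq_sermul _ _ (frefl _) S11E) (frefl _)).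
  rewrite (eq_sermul _ _ (resolvent_sermul_lin _ _) (frefl _)) monomial_sermul //.
    by rewrite subr0 /e mulNr !mulrA addNr.
  by move=> s s1; rewrite /e resolvent_le0 ?mul0r //; lia.
Qed.

Lemma S_qdet n : qdet eps alpha S n = (n == 0)%:R.
Proof.
rewrite /qdet /= {1}/sermul big1 ?if_same ?sub0r => [|k _]; last by rewrite S22E mul0r.
rewrite (eq_sermul _ _ S12E (sershift_monomial0 _ _ _)) // monomial_sermul //; last first.
  by move=> r r1; rewrite monomial_out //; apply/eqP; lia.
rewrite subr0 /monomial; case: (n == 0); rewrite ?mulr0 ?oppr0 //.
by rewrite mulrN opprK; case: zdiff.
Qed.

Lemma S_yangian_rel : yangian_sl2_rel eps alpha S.
Proof. by split; [exact: S_RTT | exact: S_gauss_decomp | exact: S_qdet]. Qed.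

End DiffOperators.

Theorem proposition4p5 (eps : CC)
    (Y : algType CC) (T : 'I_2 -> 'I_2 -> int -> Y)
    (D : algType CC) (z zi d : D) :
  is_shifted_yangian_sl2 eps alpha T ->
  is_Diff_Cx z zi d ->
  exists phi : Y -> D,
    [/\ is_alg_hom phi,
        (forall i j r, phi (T i j r) = S_coef eps z zi d i j r) &
        forall psi : Y -> D, is_alg_hom psi ->
          (forall i j r, psi (T i j r) = S_coef eps z zi d i j r) ->
          psi =1 phi].
Proof.
move=> [_ Y_universal] [zdiff _].
exact: Y_universal (S_yangian_rel eps zdiff).
Qed.
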